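(* Let $H, N, d_h$ be positive integers and $d = H d_h$. Fix a layer $l$ and, for each head $h \in \{1,\dots,H\}$, let $q_h \in \mathbb{R}^{1\times d_h}$, $K_{l,h} \in \mathbb{R}^{N\times d_h}$ and $V_{l,h}\in\mathbb{R}^{N\times d_h}$. Let $W_l^O \in \mathbb{R}^{d\times d}$. Define the attention weights $A^N_{l,h} = \mathrm{Softmax}\!\left(q_h K_{l,h}^T/\sqrt{d_h}\right)\in\mathbb{R}^{1\times N}$. For each $h$ let $\mathcal{I}_{l,h}\in\{0,1\}^N$ be a mask with $\mathcal{I}_{l,h}[i]=1$ for at least one $i$, and define the masked attention weights $$\hat{A}^N_{l,h} = \frac{A^N_{l,h}\odot \mathcal{I}_{l,h}}{\|A^N_{l,h}\odot \mathcal{I}_{l,h}\|_1},$$ where $\odot$ is the entrywise product. Let $$y^N_l = \mathrm{Cat}_{h\in[H]}\big(A^N_{l,h}V_{l,h}\big)\,W_l^O,\qquad \hat{y}^N_l = \mathrm{Cat}_{h\in[H]}\big(\hat{A}^N_{l,h}V_{l,h}\big)\,W_l^O,$$ where $\mathrm{Cat}$ concatenates the $H$ row vectors of length $d_h$ into a row vector of length $d$. Then $$\|y^N_l-\hat{y}^N_l\|_1 \le 2\hat{C}\sum_{h\in[H]}\sum_{i\in[N]} A^N_{l,h}[i]\,\bar{V}_{l,h}\,\big(1-\mathcal{I}_{l,h}[i]\big),$$ where $\hat{C} = \|(W_l^O)^T\|_1$ is the induced matrix $1$-norm of $(W_l^O)^T$ (the largest absolute column sum of $(W_l^O)^T$),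 and $\bar{V}_{l,h} = \max_{k\in[N]}\|V_{l,h}[k]\|_1$, with $V_{l,h}[k]$ the $k$-th row of $V_{l,h}$.
   Context: This models the attention output of one Transformer layer at decoding step $N$ with $H$ heads, before and after evicting key–value cache entries: $\mathcal{I}_{l,h}[i]=1$ means the $i$-th cached key/value of head $h$ is retained and $0$ means it is evicted; evicting entries is equivalent to setting the corresponding pre-softmax logits to $-\infty$, which yields the renormalized weights $\hat{A}^N_{l,h}$. Vector norms $\|\cdot\|_1$ are the usual $\ell_1$ norms; $[N]=\{1,\dots,N\}$. *)

From HB Require Import structures.
From mathcomp Require Import all_boot all_order all_algebra.
From mathcomp Require Import all_classical all_reals.
From mathcomp Require Import sequences exp.
Set Implicit Arguments. Unset Strict Implicit. Unset Printing Implicit Defensive.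
Import Order.TTheory GRing.Theory Num.Theory.
Local Open Scope ring_scope.

Section Attn.
Variable R : realType.

Definition l1norm n (v : 'rV[R]_n) : R := \sum_(j < n) `|v 0 j|.

Definition mx_norm1 m n (M : 'M[R]_(m, n)) : R :=
  \big[Num.max/0]_(j < n) \sum_(i < m) `|M i j|.

Definition softmax n (x : 'rV[R]_n) : 'rV[R]_n :=
  \row_(i < n) (expR (x 0 i) / \sum_(k < n) expR (x 0 k)).

Definition attn_weights dh N (q : 'rV[R]_dh) (K : 'M[R]_(N, dh)) : 'rV[R]_N :=
  softmax ((Num.sqrt (dh%:R))^-1 *: (q *m K^T)).

Definition ind (b : bool) : R := if b then 1 else 0.

Definition masked_weights N (A : 'rV[R]_N) (I : 'I_N -> bool) : 'rV[R]_N :=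
  let AI := \row_(i < N) (A 0 i * ind (I i)) in
  (l1norm AI)^-1 *: AI.

(* concatenation of H row vectors of length dh into a row of length H*dh
   (block h occupies positions h*dh .. h*dh+dh-1) *)
Definition cat_heads H dh (f : 'I_H -> 'rV[R]_dh) : 'rV[R]_(H * dh) :=
  mxvec (\matrix_(h < H, j < dh) f h 0 j).

Definition Vbar N dh (V : 'M[R]_(N, dh)) : R :=
  \big[Num.max/0]_(k < N) l1norm (row k V).

End Attn.

From HB Require Import structures.
From mathcomp Require Import all_boot all_order all_algebra.
From mathcomp Require Import all_classical all_reals.
From mathcomp Require Import sequences exp.
Set Implicit Arguments. Unset Strict Implicit. Unset Printing Implicit Defensive.
Import Order.TTheory GRing.Theory Num.Theory.
Local Open Scope ring_scope.

(* If S is the attention mass kept by the mask, renormalising moves each kept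
   weight A_i to A_i / S and each evicted one to 0, so the l1 distance between
   the two weight vectors is (1 - S) + S (1/S - 1) = 2 (1 - S), twice the
   evicted mass.  Multiplying by V, concatenating the heads and multiplying by
   W^O are l1-Lipschitz with constants Vbar, 1 and ||(W^O)^T||_1. *)

Section AttentionBounds.
Variable R : realType.

Lemma mx_norm1_ge0 m n (M : 'M[R]_(m, n)) : 0 <= mx_norm1 M.
Proof. exact: bigmax_ge_id. Qed.

Lemma l1norm_row_le_mx_norm1_tr m n (W : 'M[R]_(m, n)) i :
  l1norm (row i W) <= mx_norm1 W^T.
Proof.
have -> : l1norm (row i W) = \sum_j `|W^T j i|.
  by apply: eq_bigr => j _; rewrite !mxE.
exact: le_bigmax.
Qed.

Lemma l1norm_row_le_Vbar N dh (V : 'M[R]_(N, dh)) k : l1norm (row k V) <= Vbar V.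
Proof. exact: le_bigmax. Qed.

Lemma l1norm_mulmx_le_rows m n (x : 'rV[R]_m) (W : 'M[R]_(m, n)) :
  l1norm (x *m W) <= \sum_i `|x 0 i| * l1norm (row i W).
Proof.
rewrite /l1norm; under [X in _ <= X]eq_bigr do rewrite mulr_sumr.
rewrite exchange_big; apply: ler_sum => j _; rewrite mxE.
apply: le_trans (ler_norm_sum _ _ _) _.
by apply: ler_sum => i _; rewrite normrM mxE.
Qed.

Lemma l1norm_mulmx_le m n (x : 'rV[R]_m) (W : 'M[R]_(m, n)) :
  l1norm (x *m W) <= mx_norm1 W^T * l1norm x.
Proof.
apply: le_trans (l1norm_mulmx_le_rows x W) _.
rewrite mulr_sumr; apply: ler_sum => i _; rewrite [leRHS]mulrC.
by apply: ler_wpM2l; [exact: normr_ge0 | exact: l1norm_row_le_mx_norm1_tr].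
Qed.

Lemma l1norm_mulmx_le_Vbar N dh (x : 'rV[R]_N) (V : 'M[R]_(N, dh)) :
  l1norm (x *m V) <= l1norm x * Vbar V.
Proof.
apply: le_trans (l1norm_mulmx_le_rows x V) _.
rewrite mulr_suml; apply: ler_sum => i _.
by apply: ler_wpM2l; [exact: normr_ge0 | exact: l1norm_row_le_Vbar].
Qed.

Lemma l1norm_cat_heads H dh (f : 'I_H -> 'rV[R]_dh) :
  l1norm (cat_heads f) = \sum_h l1norm (f h).
Proof.
rewrite /l1norm /cat_heads (reindex _ (curry_mxvec_bij _ _)) pair_bigA /=.
by apply: eq_bigr => -[h j] _; rewrite mxvecE mxE.
Qed.

Lemma cat_headsB H dh (f g : 'I_H -> 'rV[R]_dh) :
  cat_heads f - cat_heads g = cat_heads (fun h => f h - g h).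
Proof.
rewrite /cat_heads -linearB /=; congr mxvec.
by apply/matrixP => h j; rewrite !mxE.
Qed.

Lemma psumr_gt0 (I : finType) (F : I -> R) j :
  (forall i, 0 <= F i) -> 0 < F j -> 0 < \sum_i F i.
Proof.
move=> F_ge0 Fj_gt0; rewrite (bigD1 j) //=.
by rewrite ltr_pwDl // sumr_ge0.
Qed.

Lemma softmax_gt0 n (x : 'rV[R]_n) i : 0 < softmax x 0 i.
Proof.
rewrite mxE divr_gt0 ?expR_gt0 // (psumr_gt0 (j := i)) ?expR_gt0 //.
by move=> k; exact/ltW/expR_gt0.
Qed.

Lemma softmax_sum1 n (x : 'rV[R]_n) (i0 : 'I_n) : \sum_i softmax x 0 i = 1.
Proof.
under eq_bigr do rewrite mxE.
rewrite -mulr_suml divff // gt_eqF // (psumr_gt0 (j := i0)) ?expR_gt0 //.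
by move=> k; exact/ltW/expR_gt0.
Qed.

Lemma ind_ge0 b : 0 <= ind R b.
Proof. by case: b; rewrite /ind ?ler01. Qed.

Lemma l1norm_sub_masked_weights N (A : 'rV[R]_N) (I : 'I_N -> bool) :
  (forall i, 0 <= A 0 i) -> \sum_i A 0 i = 1 ->
  0 < \sum_i A 0 i * ind R (I i) ->
  l1norm (A - masked_weights A I) = 2 * \sum_i A 0 i * (1 - ind R (I i)).
Proof.
move=> A_ge0 A_sum1; set S := \sum_i _ => S_gt0.
have kept_l1 : l1norm (\row_i (A 0 i * ind R (I i))) = S.
  by apply: eq_bigr => i _; rewrite mxE ger0_norm // mulr_ge0 ?ind_ge0.
have evicted : \sum_i A 0 i * (1 - ind R (I i)) = 1 - S.
  by rewrite -[in RHS]A_sum1 -sumrB; apply: eq_bigr => i _; rewrite mulrBr mulr1.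
have S_le1 : S <= 1.
  rewrite -subr_ge0 -evicted sumr_ge0 // => i _.
  by rewrite mulr_ge0 //; case: (I i); rewrite /ind ?subrr ?subr0.
rewrite /masked_weights kept_l1.
transitivity (\sum_i (A 0 i * (1 - ind R (I i)) + A 0 i * ind R (I i) * (S^-1 - 1))).
  apply: eq_bigr => i _; rewrite !mxE /ind; case: (I i).
    rewrite subrr !mulr0 add0r mulr1 mulrC -{1}[A 0 i]mulr1 -mulrBr normrM.
    by rewrite ger0_norm // ler0_norm ?opprB // subr_le0 invf_ge1.
  by rewrite !mulr0 !subr0 mulr1 mul0r addr0 ger0_norm.
rewrite big_split /= evicted -mulr_suml -/S mulrBr mulr1 mulfV ?gt_eqF //.
by rewrite -mulr2n mulr_natl.
Qed.

Lemma l1norm_masked_head_le N dh (A : 'rV[R]_N) (I : 'I_N -> bool)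
    (V : 'M[R]_(N, dh)) :
  (forall i, 0 <= A 0 i) -> \sum_i A 0 i = 1 ->
  0 < \sum_i A 0 i * ind R (I i) ->
  l1norm ((A - masked_weights A I) *m V) <=
    2 * \sum_i A 0 i * Vbar V * (1 - ind R (I i)).
Proof.
move=> A_ge0 A_sum1 kept_gt0.
apply: le_trans (l1norm_mulmx_le_Vbar _ _) _.
rewrite l1norm_sub_masked_weights // -mulrA mulr_suml.
by under eq_bigr do rewrite mulrAC.
Qed.

End AttentionBounds.

Theorem theorem1 (R : realType) (H N dh : nat)
  (HH : (0 < H)%N) (HN : (0 < N)%N) (Hdh : (0 < dh)%N)
  (q : 'I_H -> 'rV[R]_dh) (K V : 'I_H -> 'M[R]_(N, dh))
  (WO : 'M[R]_(H * dh, H * dh)) (I : 'I_H -> 'I_N -> bool)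
  (HI : forall h, exists i, I h i) :
  let A := fun h => attn_weights (q h) (K h) in
  let Ahat := fun h => masked_weights (A h) (I h) in
  let y := cat_heads (fun h => A h *m V h) *m WO in
  let yhat := cat_heads (fun h => Ahat h *m V h) *m WO in
  l1norm (y - yhat) <=
    2 * mx_norm1 WO^T *
    \sum_(h < H) \sum_(i < N) A h 0 i * Vbar (V h) * (1 - ind R (I h i)).
Proof.
cbv zeta; rewrite -mulmxBl cat_headsB.
apply: le_trans (l1norm_mulmx_le _ _) _.
rewrite [2 * _]mulrC -mulrA ler_wpM2l ?mx_norm1_ge0 //.
rewrite l1norm_cat_heads mulr_sumr ler_sum // => h _.
have [i0 kept_i0] := HI h.
have A_gt0 i : 0 < attn_weights (q h) (K h) 0 i by exact: softmax_gt0.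
rewrite -mulmxBl; apply: l1norm_masked_head_le.
- by move=> i; exact: ltW.
- exact: softmax_sum1 i0.
- apply: (psumr_gt0 (j := i0)) => [i|]; last by rewrite /ind kept_i0 mulr1.
  by rewrite mulr_ge0 ?ind_ge0 ?ltW.
Qed.
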